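(* Let $m\ge2$ and let $(S,\mu^{(m)})$ be a commutative $m$-ary semigroup, and let $\sim_m$ be the equivalence relation on $S\times S$ given by $(a_1,b_1)\sim_m(a_2,b_2)$ iff there exist $x,y\in S$ with $\mu^{(m)}[a_1^{m-1},x]=\mu^{(m)}[a_2^{m-1},y]$ and $\mu^{(m)}[b_1^{m-1},x]=\mu^{(m)}[b_2^{m-1},y]$. Denote the class of $(a,b)$ by $[a,b]$. Then the componentwise $m$-ary operation $\widetilde{\boldsymbol\mu}^{(m)}\big[[a_1,b_1],\dots,[a_m,b_m]\big]=\big[\mu^{(m)}[a_1,\dots,a_m],\ \mu^{(m)}[b_1,\dots,b_m]\big]$ is well defined on $(S\times S)/\sim_m$, and with the unary operation $\overline{[a,b]}=\big[\mu^{(m)}[a,b^{m-1}],\ \mu^{(m)}[a^{m-1},b]\big]$ one has $\widetilde{\boldsymbol\mu}^{(m)}\big[\widetilde{\mathfrak S}^{\,m-1},\overline{\widetilde{\mathfrak S}}\big]=\widetilde{\mathfrak S}$ for every class $\widetilde{\mathfrak S}$ (with $\overline{\widetilde{\mathfrak S}}$ in any place); consequently $\big((S\times S)/\sim_m,\widetilde{\boldsymbol\mu}^{(m)}\big)$ is an $m$-ary group with querelement map $\widetilde{\mathfrak S}\mapsto\overline{\widetilde{\mathfrak S}}$.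
   Context: An $m$-ary semigroup is a set with a totally associative $m$-ary operation; commutative means invariant under all permutations of arguments. $a^k$ in a bracket denotes $a$ repeated $k$ times. An $m$-ary group is an $m$-ary semigroup in which each equation $\mu^{(m)}[\mathbf u,h,\mathbf t]=g$ has a unique solution $h$ for every place of $h$; the querelement $\bar g$ of $g$ is the unique solution of $\mu^{(m)}[g^{m-1},\bar g]=g$ (with $\bar g$ in any place). *)

From Stdlib Require Import ClassicalEpsilon Permutation.
From mathcomp Require Import all_boot.
Set Implicit Arguments. Unset Strict Implicit. Unset Printing Implicit Defensive.

(* An m-ary operation on S is represented by mu : seq S -> S, of which only
   the values on sequences of length m are relevant. *)
Section Mary.
Variables (S : Type) (m : nat) (mu : seq S -> S).

Definition mary_assoc : Prop :=
  forall (i j : nat) (s : seq S), size s = (2 * m).-1 -> i < m -> j < m ->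
    mu (take i s ++ mu (take m (drop i s)) :: drop (i + m) s)
    = mu (take j s ++ mu (take m (drop j s)) :: drop (j + m) s).

Definition mary_comm : Prop :=
  forall s t : seq S, size s = m -> Permutation s t -> mu s = mu t.

Definition mary_group : Prop :=
  mary_assoc /\
  forall (u t : seq S) (g : S), size u + size t = m.-1 ->
    exists! h : S, mu (u ++ h :: t) = g.

Definition is_querelement_map (qbar : S -> S) : Prop :=
  forall (g : S) (i : nat), i < m ->
    mu (nseq i g ++ qbar g :: nseq (m.-1 - i) g) = g.

Definition simm (p q : S * S) : Prop :=
  exists x y : S,
    mu (rcons (nseq m.-1 p.1) x) = mu (rcons (nseq m.-1 q.1) y) /\
    mu (rcons (nseq m.-1 p.2) x) = mu (rcons (nseq m.-1 q.2) y).

Record quot : Type := Quot {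
  qset : S * S -> Prop;
  qsetP : exists p : S * S, qset = simm p }.

Definition cls (p : S * S) : quot := @Quot (simm p) (ex_intro _ p erefl).

Definition rep (X : quot) : S * S :=
  proj1_sig (constructive_indefinite_description _ (qsetP X)).

Definition qmu (l : seq quot) : quot :=
  cls (mu (map (fun X => (rep X).1) l), mu (map (fun X => (rep X).2) l)).

Definition qbar (X : quot) : quot :=
  let p := rep X in
  cls (mu (p.1 :: nseq m.-1 p.2), mu (rcons (nseq m.-1 p.1) p.2)).

End Mary.

Arguments simm {S} m mu p q.
Arguments cls {S} m mu p.
Arguments qmu {S} m mu l.
Arguments qbar {S} m mu X.
Arguments quot {S} m mu.
Arguments mary_group {S} m mu.
Arguments is_querelement_map {S} m mu qbar.
Arguments mary_assoc {S} m mu.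
Arguments mary_comm {S} m mu.

From Stdlib Require Import ClassicalEpsilon Permutation.
From Stdlib Require Import ProofIrrelevance FunctionalExtensionality PropExtensionality.
From mathcomp Require Import all_boot zify.
Set Implicit Arguments. Unset Strict Implicit. Unset Printing Implicit Defensive.

(* In a commutative m-ary semigroup every bracketing of a word of length k(m-1)+1
   has the same value [mprod], determined by the multiset of letters; all the
   identities below are proved by comparing such multisets.  They show that ~ is a
   congruence that can be cancelled in each argument: (mu[a,c], mu[b,d]) ~
   (mu[a',c], mu[b',d]) forces (a,b) ~ (a',b').  The equation mu~[u, h, t] = [c,d]
   is solved by h = [mu[c, ys], mu[d, xs]], where xs and ys collect the two
   components of the other arguments; for u and t made of copies of [a,b] this
   solution is the querelement [mu[a, b^(m-1)], mu[a^(m-1), b]]. *)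

Lemma app_cat T (s t : seq T) : (s ++ t)%list = s ++ t.
Proof. by []. Qed.

Lemma Permutation_size T (s t : seq T) : Permutation s t -> size s = size t.
Proof.
have length_size (u : seq T) : length u = size u by elim: u => //= x u ->.
by move/Permutation_length; rewrite !length_size.
Qed.

Lemma Permutation_cons_middle T (s t : seq T) x : Permutation (s ++ x :: t) (x :: s ++ t).
Proof. exact/Permutation_sym/Permutation_middle. Qed.

Lemma Permutation_ind_swap T X (f : seq T -> X) n :
  (forall p x y q, size p + (size q).+2 = n -> f (p ++ x :: y :: q) = f (p ++ y :: x :: q)) ->
  forall s t, size s = n -> Permutation s t -> f s = f t.
Proof.
move=> fswap s t sz_s Pst.
suff: forall p, size p + size s = n -> f (p ++ s) = f (p ++ t) by move=> /(_ [::]); apply.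
elim: Pst {sz_s} => [//|x l l' _ IH|x y l|l l' l'' P1 IH1 _ IH2] p sz_p.
- by rewrite -!cat_rcons; apply: IH; rewrite size_rcons /=; move: sz_p => /=; lia.
- exact: fswap.
- by rewrite IH1 // IH2 // -(Permutation_size P1).
Qed.

Lemma perm_eq_Permutation (T : eqType) (s t : seq T) : perm_eq s t -> Permutation s t.
Proof.
elim: s t => [|x s IH] t P; first by case: t P => // y t /perm_size.
have : x \in t by rewrite -(perm_mem P) mem_head.
move: P => /[swap] /splitPr[t1 t2] P.
have P' : perm_eq s (t1 ++ t2).
  by rewrite -(perm_cons x) (perm_trans P) // -cat1s perm_catCA.
exact: Permutation_trans (perm_skip x (IH _ P')) (Permutation_middle _ _ _).
Qed.

Lemma Permutation_flatten T (L L' : seq (seq T)) :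
  Permutation L L' -> Permutation (flatten L) (flatten L').
Proof.
elim=> //= [x l l' _ IH|x y l|l l' l'' _ IH1 _ IH2].
- exact: Permutation_app_head.
- exact: Permutation_app_swap_app.
- exact: Permutation_trans IH1 IH2.
Qed.

(* Words over a type without decidable equality are compared by cutting them into
   blocks [g i] and counting the indices [i]. *)
Lemma Permutation_flatten_map T (g : nat -> seq T) (s t : seq nat) u v :
  u = flatten (map g s) -> v = flatten (map g t) -> perm_eq s t -> Permutation u v.
Proof. by move=> -> -> /perm_eq_Permutation P; apply/Permutation_flatten/Permutation_map. Qed.

Lemma dropl_cat T k (s t : seq T) : k <= size s -> drop k (s ++ t) = drop k s ++ t.
Proof. by move=> k_le; rewrite -{1}(cat_take_drop k s) -catA drop_size_cat // size_takel. Qed.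

Lemma size_flatten_nseq T k (s : seq T) : size (flatten (nseq k s)) = k * size s.
Proof. by elim: k => //= k IH; rewrite size_cat IH mulSn. Qed.

Lemma flatten_nseq1 T k (x : T) : flatten (nseq k [:: x]) = nseq k x.
Proof. by elim: k => //= k ->. Qed.

Lemma flatten_map_flatten_nseq T (g : nat -> seq T) k s :
  flatten (map g (flatten (nseq k s))) = flatten (nseq k (flatten (map g s))).
Proof. by elim: k => //= k IH; rewrite map_cat flatten_cat IH. Qed.

Lemma Permutation_flatten_nseq T k (s t : seq T) :
  Permutation s t -> Permutation (flatten (nseq k s)) (flatten (nseq k t)).
Proof. by move=> Pst; elim: k => //= k IH; apply: Permutation_app. Qed.

Lemma count_flatten_nseq T (P : pred T) k s : count P (flatten (nseq k s)) = k * count P s.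
Proof. by elim: k => //= k IH; rewrite count_cat IH mulSn. Qed.

Ltac solve_size :=
  rewrite /= ?(size_cat, size_rcons, size_nseq, size_flatten_nseq) /=; nia.
Ltac flatten_blocks :=
  rewrite ?(map_cat, flatten_cat, flatten_map_flatten_nseq, map_nseq) /=
          ?flatten_nseq1 ?cats0 -?cats1 -?catA.
Ltac perm_by_count :=
  apply/permP => P; rewrite ?(count_cat, count_flatten_nseq, count_nseq) /=; nia.

Section CommutativeSemigroup.
Variables (S : Type) (m : nat) (mu : seq S -> S).
Hypotheses (m_gt1 : 1 < m) (mu_assoc : mary_assoc m mu) (mu_comm : mary_comm m mu).
Local Notation n := m.-1.

Lemma mu_rcons_mu p z w v : size p = n -> size v = m.-2 ->
  mu (mu (rcons p z) :: w :: v) = mu (rcons p (mu (z :: w :: v))).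
Proof.
move=> sz_p sz_v; set s := p ++ z :: w :: v.
have sz_s : size s = (2 * m).-1 by rewrite size_cat /= sz_p sz_v; lia.
have sz_pz : size (rcons p z) = m by rewrite size_rcons sz_p; lia.
have := mu_assoc sz_s (_ : 0 < m) (_ : n < m); rewrite take0 drop0 add0n /=.
rewrite {1 2}/s -cat_rcons take_size_cat // drop_size_cat //.
rewrite /s take_size_cat // drop_size_cat // take_oversize /= ?sz_v; last lia.
rewrite drop_oversize ?cats1; last by rewrite size_cat /= sz_p sz_v; lia.
by apply; lia.
Qed.

Lemma mu_swap_rcons p x y v : size p = n -> size v = m.-2 ->
  mu (mu (rcons p x) :: y :: v) = mu (mu (rcons p y) :: x :: v).
Proof.
move=> sz_p sz_v; rewrite !mu_rcons_mu //; congr (mu (rcons p _)).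
by apply: mu_comm; [rewrite /= sz_v; lia | exact: perm_swap].
Qed.

(* [iter_mu k s] multiplies the first [m] letters of [s] and repeats [k] times;
   it is meant for words of length [k * n + 1] (for the empty word it returns the
   junk value [mu [::]]). *)
Fixpoint iter_mu (k : nat) (s : seq S) : S :=
  if k is k'.+1 then iter_mu k' (mu (take m s) :: drop m s) else head (mu [::]) s.

Lemma iter_mu_perm k s t : size s = (k * n).+1 -> Permutation s t -> iter_mu k s = iter_mu k t.
Proof.
elim: k s t => [|k IH] s t sz_s Pst.
  by case: s sz_s Pst => [|x [|]] //= _ P1; rewrite (Permutation_length_1_inv P1).
apply: (Permutation_ind_swap (f := iter_mu k.+1) _ sz_s Pst) => {s t sz_s Pst} p x y q sz_pq /=.
case: (ltnP (size p).+1 m) => p_lt.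
  rewrite !take_cat !drop_cat (_ : m < size p = false) /=; last lia.
  have -> : m - size p = (m - size p - 2).+2 by lia.
  congr (iter_mu k (_ :: _)); apply: mu_comm.
    by rewrite size_cat /= size_take; case: ifP; lia.
  exact/Permutation_app_head/perm_swap.
case: (ltnP (size p) m) => p_lt'.
  have sz_p : size p = n by lia.
  case: k IH sz_pq => [|k] IH sz_pq; first lia.
  have sz_q : m.-2 <= size q by lia.
  rewrite !take_cat !drop_cat (_ : m < size p = false) /=; last lia.
  have -> : m - size p = 1 by lia.
  rewrite /= !cats1 -(cat_take_drop m.-2 q) /=.
  have sz_tq : size (take m.-2 q) = m.-2 by rewrite size_take; case: ifP; lia.
  rewrite -!cat_cons !take_size_cat ?drop_size_cat /= ?sz_tq; try lia.
  by rewrite mu_swap_rcons.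
rewrite !takel_cat ?dropl_cat //; apply: IH.
  by rewrite /= size_cat size_drop /=; lia.
exact/perm_skip/Permutation_app_head/perm_swap.
Qed.

Lemma iter_mu_contract k s1 t s2 : size t = m -> size (s1 ++ t ++ s2) = (k.+1 * n).+1 ->
  iter_mu k.+1 (s1 ++ t ++ s2) = iter_mu k (s1 ++ mu t :: s2).
Proof.
move=> sz_t sz_s; rewrite (iter_mu_perm sz_s (Permutation_app_swap_app _ _ _)) /= !app_cat.
rewrite take_size_cat // drop_size_cat //; apply: iter_mu_perm.
  by move: sz_s; rewrite /= !size_cat /= sz_t mulSn; lia.
exact: Permutation_middle.
Qed.

Lemma iter_mu_expand j k s1 t s2 : size t = (j * n).+1 -> size s1 + size s2 = k * n ->
  iter_mu k (s1 ++ iter_mu j t :: s2) = iter_mu (k + j) (s1 ++ t ++ s2).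
Proof.
elim: j k t => [|j IH] k t sz_t sz_s12.
  by case: t sz_t => [|x [|]] //= _; rewrite addn0.
have m_le : m <= size t by rewrite sz_t mulSn; lia.
rewrite /= IH //; last by rewrite /= size_drop sz_t; nia.
rewrite addnS -[in RHS](cat_take_drop m t) -catA iter_mu_contract ?size_takel //.
by rewrite !size_cat size_takel // size_drop sz_t; nia.
Qed.

Definition mprod (s : seq S) : S := iter_mu ((size s).-1 %/ n) s.

Lemma mprodE k s : size s = (k * n).+1 -> mprod s = iter_mu k s.
Proof. by move=> sz_s; rewrite /mprod sz_s mulnK //; lia. Qed.

Lemma mprod1 x : mprod [:: x] = x.
Proof. by rewrite (@mprodE 0). Qed.

Lemma mprod_mu s : size s = m -> mprod s = mu s.
Proof.
move=> sz_s; rewrite (@mprodE 1) /=; last lia.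
by rewrite take_oversize ?drop_oversize ?sz_s.
Qed.

Lemma mprod_perm k s t : size s = (k * n).+1 -> Permutation s t -> mprod s = mprod t.
Proof.
move=> sz_s Pst; rewrite (mprodE sz_s) (@mprodE k) ?(iter_mu_perm sz_s Pst) //.
by rewrite -(Permutation_size Pst).
Qed.

Lemma mprod_expand j k s1 t s2 : size t = (j * n).+1 -> size s1 + size s2 = k * n ->
  mprod (s1 ++ mprod t :: s2) = mprod (s1 ++ t ++ s2).
Proof.
move=> sz_t sz_s12; rewrite (mprodE sz_t) (@mprodE k) ?iter_mu_expand //.
  by rewrite (@mprodE (k + j)) // !size_cat sz_t; nia.
by rewrite size_cat /=; lia.
Qed.

Lemma mprod_expand_nseq j k i s1 t s2 : size t = (j * n).+1 ->
  size s1 + i + size s2 = (k * n).+1 ->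
  mprod (s1 ++ nseq i (mprod t) ++ s2) = mprod (s1 ++ flatten (nseq i t) ++ s2).
Proof.
elim: i k s1 => [|i IH] k s1 sz_t sz_s //=.
rewrite (@mprod_expand j k) //; last by rewrite size_cat size_nseq; lia.
by rewrite catA (IH (k + j)) ?catA // size_cat sz_t; nia.
Qed.

Local Notation sim := (simm m mu).
Local Notation pw a x := (mu (rcons (nseq m.-1 a) x)).

Lemma simm_refl p : sim p p.
Proof. by exists p.1, p.1. Qed.

Lemma simm_sym p q : sim p q -> sim q p.
Proof. by case=> x [y [E1 E2]]; exists y, x. Qed.

Lemma simm_trans p q r : sim p q -> sim q r -> sim p r.
Proof.
case=> x [y [E1 E2]] [x' [y' [E3 E4]]].
exists (mu [:: x, x' & nseq m.-2 p.1]), (mu [:: y', y & nseq m.-2 p.1]); split.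
- by rewrite -mu_rcons_mu ?size_nseq // E1 mu_swap_rcons ?size_nseq // E3 mu_rcons_mu ?size_nseq.
- by rewrite -mu_rcons_mu ?size_nseq // E2 mu_swap_rcons ?size_nseq // E4 mu_rcons_mu ?size_nseq.
Qed.

Lemma pw_mu_cons a c x : size c = n -> pw (mu (a :: c)) x = mprod (pw a x :: flatten (nseq n c)).
Proof.
move=> sz_c.
rewrite -(mprod_mu (s := rcons _ x)) -?(mprod_mu (s := a :: c))
        -?(mprod_mu (s := rcons (nseq n a) x)); try solve_size.
rewrite -[in LHS]cats1 -[nseq n _ ++ _]cat0s (mprod_expand_nseq (j := 1) (k := 1)); try solve_size.
rewrite -[mprod _ :: _]cat0s (mprod_expand (j := 1) (k := n)) /=; try solve_size.
apply: (mprod_perm (k := n.+1)); first solve_size.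
apply: (Permutation_flatten_map (g := nth [::] [:: [:: a]; c; [:: x]])
          (s := flatten (nseq n [:: 0; 1]) ++ [:: 2]) (t := nseq n 0 ++ [:: 2] ++ nseq n 1)).
- by flatten_blocks.
- by flatten_blocks.
- by perm_by_count.
Qed.

Lemma pw_mprod a c d W x : size c = n -> size d = n -> Permutation W (c ++ d) ->
  pw a (mprod (flatten (nseq n W) ++ [:: x])) = mprod (pw (mu (a :: c)) x :: flatten (nseq n d)).
Proof.
move=> sz_c sz_d PW; have := Permutation_size PW; rewrite size_cat sz_c sz_d => sz_W.
rewrite pw_mu_cons // -(mprod_mu (s := rcons _ _)); try solve_size.
rewrite -cats1 (mprod_expand (j := n.*2) (k := 1)); try solve_size.
rewrite -[mprod (_ :: _) :: _]cat0s (mprod_expand (j := n) (k := n)) /=; try solve_size.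
rewrite -(mprod_mu (s := rcons _ x)); last solve_size.
rewrite -[mprod _ :: _]cat0s (mprod_expand (j := 1) (k := n.*2)) /=; try solve_size.
apply: (mprod_perm (k := n.*2.+1)); first solve_size.
have PW' := Permutation_flatten_nseq n PW.
apply: (Permutation_trans
          (l' := nseq n a ++ (flatten (nseq n (c ++ d)) ++ [:: x]) ++ [::])).
  exact/Permutation_app_head/Permutation_app_tail/Permutation_app_tail.
apply: (Permutation_flatten_map (g := nth [::] [:: [:: a]; c; d; [:: x]])
          (s := nseq n 0 ++ flatten (nseq n [:: 1; 2]) ++ [:: 3])
          (t := nseq n 0 ++ [:: 3] ++ nseq n 1 ++ nseq n 2)).
- by flatten_blocks.
- by flatten_blocks.
- by perm_by_count.
Qed.

Lemma pw_pw a b x : pw (pw a b) (mu (nseq m x)) = mu (pw b x :: nseq n (pw a x)).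
Proof.
rewrite -(mprod_mu (s := nseq m x)) -?(mprod_mu (s := rcons (nseq n a) b)); try solve_size.
rewrite -(mprod_mu (s := rcons (nseq n _) (mprod _))) -[in LHS]cats1; last solve_size.
rewrite -[nseq n _ ++ _]cat0s (mprod_expand_nseq (j := 1) (k := 1)) /=; try solve_size.
rewrite (mprod_expand (j := 1) (k := n.+1)); try solve_size.
rewrite -(mprod_mu (s := pw b x :: _)); last solve_size.
rewrite -(mprod_mu (s := rcons (nseq n b) x)) -?(mprod_mu (s := rcons (nseq n a) x));
  try solve_size.
rewrite -[mprod _ :: _]cat0s (mprod_expand (j := 1) (k := 1)) /=; try solve_size.
rewrite -[nseq n (mprod _)]cats0 (mprod_expand_nseq (j := 1) (k := 2)); try solve_size.
apply: (mprod_perm (k := n.+2)); first solve_size.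
apply: (Permutation_flatten_map (g := nth [::] [:: [:: a]; [:: b]; [:: x]])
          (s := flatten (nseq n (nseq n 0 ++ [:: 1])) ++ nseq m 2)
          (t := nseq n 1 ++ [:: 2] ++ flatten (nseq n (nseq n 0 ++ [:: 2])))).
- by flatten_blocks.
- by flatten_blocks.
- by perm_by_count.
Qed.

Lemma simm_mu_cons a b a' b' c d : size c = n -> size d = n -> sim (a, b) (a', b') ->
  sim (mu (a :: c), mu (b :: d)) (mu (a' :: c), mu (b' :: d)).
Proof. by move=> sz_c sz_d [x [y [/= E1 E2]]]; exists x, y => /=; rewrite !pw_mu_cons // E1 E2. Qed.

Lemma simm_mu_cons_cancel a b a' b' c d : size c = n -> size d = n ->
  sim (mu (a :: c), mu (b :: d)) (mu (a' :: c), mu (b' :: d)) -> sim (a, b) (a', b').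
Proof.
move=> sz_c sz_d [x [y [/= E1 E2]]].
(* Absorbing [n] copies of [c] and [d] into the witnesses turns [a] into [mu (a :: c)]. *)
exists (mprod (flatten (nseq n (c ++ d)) ++ [:: x])), (mprod (flatten (nseq n (c ++ d)) ++ [:: y])).
have Pcd : Permutation (c ++ d) (d ++ c) by apply: Permutation_app_comm.
split=> /=.
- by rewrite !(pw_mprod _ _ sz_c sz_d (Permutation_refl _)) E1.
- by rewrite !(pw_mprod _ _ sz_d sz_c Pcd) E2.
Qed.

Lemma simm_solution c d xs ys : size xs = n -> size ys = n ->
  sim (mu (mu (c :: ys) :: xs), mu (mu (d :: xs) :: ys)) (c, d).
Proof.
move=> sz_xs sz_ys; exists c, (mprod (flatten (nseq n (ys ++ xs)) ++ [:: c])).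
have Pyx : Permutation (ys ++ xs) (xs ++ ys) by apply: Permutation_app_comm.
split=> /=.
- by rewrite pw_mu_cons // (pw_mprod _ _ sz_ys sz_xs (Permutation_refl _)).
- by rewrite pw_mu_cons // (pw_mprod _ _ sz_xs sz_ys Pyx).
Qed.

Lemma mu_cons_nseq a b : mu (a :: nseq n b) = pw b a.
Proof.
apply: mu_comm; first by rewrite /= size_nseq; lia.
by rewrite -cats1; apply: Permutation_cons_append.
Qed.

Definition bar (p : S * S) : S * S := (mu (p.1 :: nseq n p.2), mu (rcons (nseq n p.1) p.2)).

Lemma simm_bar p q : sim p q -> sim (bar p) (bar q).
Proof.
case: p q => a b [a' b'] [x [y [/= E1 E2]]].
exists (mu (nseq m x)), (mu (nseq m y)); split; rewrite /= ?mu_cons_nseq.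
- by rewrite !pw_pw E1 E2.
- by rewrite !pw_pw E1 E2.
Qed.

Definition mu2 (ps : seq (S * S)) : S * S := (mu (map fst ps), mu (map snd ps)).

Lemma mu2_rot pre p post : size pre + size post = n ->
  mu2 (pre ++ p :: post) = (mu (p.1 :: map fst (pre ++ post)), mu (p.2 :: map snd (pre ++ post))).
Proof.
move=> sz; rewrite /mu2 !map_cat /=; congr pair; apply: mu_comm;
  rewrite ?size_cat /= ?size_map; try lia; exact: Permutation_cons_middle.
Qed.

Lemma simm_mu2_slot pre p q post : size pre + size post = n -> sim p q ->
  sim (mu2 (pre ++ p :: post)) (mu2 (pre ++ q :: post)).
Proof.
case: p q => a b [a' b'] sz Hpq; rewrite !mu2_rot //.
by apply: simm_mu_cons; rewrite // size_map size_cat.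
Qed.

Lemma simm_mu2_map f ps : (forall p, sim (f p) p) -> size ps = m -> sim (mu2 (map f ps)) (mu2 ps).
Proof.
move=> Hf; suff gen pre : size pre + size ps = m -> sim (mu2 (pre ++ map f ps)) (mu2 (pre ++ ps)).
  exact: gen [::].
elim: ps pre => [|p ps IH] pre sz /=; first exact: simm_refl.
apply: simm_trans (simm_mu2_slot _ (Hf p)) _; first by move: sz; rewrite /= size_map; lia.
by rewrite -!cat_rcons; apply: IH; rewrite size_rcons; move: sz => /=; lia.
Qed.

Lemma simm_mu2_bar p i : i < m -> sim (mu2 (nseq i p ++ bar p :: nseq (n - i) p)) p.
Proof.
case: p => a b i_lt; rewrite mu2_rot ?size_nseq; last lia.
rewrite !map_cat !map_nseq -!nseqD subnKC /=; last lia.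
by rewrite -mu_cons_nseq; apply: simm_solution; rewrite size_nseq.
Qed.

Local Notation cls := (cls m mu).
Local Notation qmu := (qmu m mu).
Local Notation qbar := (qbar m mu).

Lemma quot_eq (X Y : quot m mu) : qset X = qset Y -> X = Y.
Proof. by case: X Y => [P HP] [Q HQ] /= E; subst Q; congr Quot; apply: proof_irrelevance. Qed.

Lemma cls_eqP p q : cls p = cls q <-> sim p q.
Proof.
split=> [E | Hpq].
  by have /= -> := f_equal (@qset _ _ _) E; apply: simm_refl.
apply/quot_eq/functional_extensionality => r /=; apply: propositional_extensionality.
by split; apply: simm_trans; [exact: simm_sym | ].
Qed.

Lemma qset_rep (X : quot m mu) : qset X = sim (rep X).
Proof. by rewrite /rep; case: constructive_indefinite_description. Qed.

Lemma cls_rep (X : quot m mu) : cls (rep X) = X.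
Proof. by apply: quot_eq; rewrite /= qset_rep. Qed.

Lemma simm_rep_cls p : sim (rep (cls p)) p.
Proof. by rewrite -qset_rep; apply: simm_refl. Qed.

Lemma map_cls_rep (l : seq (quot m mu)) : map cls (map (@rep _ _ _) l) = l.
Proof. by rewrite -map_comp (eq_map cls_rep) map_id. Qed.

Lemma qmuE l : qmu l = cls (mu2 (map (@rep _ _ _) l)).
Proof. by rewrite /mu2 -!map_comp. Qed.

Lemma qmu_cls ps : size ps = m -> qmu (map cls ps) = cls (mu2 ps).
Proof. by move=> sz; rewrite qmuE -map_comp; apply/cls_eqP/simm_mu2_map/sz/simm_rep_cls. Qed.

Lemma qbar_cls p : qbar (cls p) = cls (bar p).
Proof. exact/cls_eqP/simm_bar/simm_rep_cls. Qed.

Lemma qmu_qbar X i : i < m -> qmu (nseq i X ++ qbar X :: nseq (n - i) X) = X.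
Proof.
move=> i_lt; rewrite -(cls_rep X); move: (rep X) => p; rewrite qbar_cls.
rewrite -!map_nseq -[cls (bar p) :: _]/(map cls (_ :: _)) -map_cat qmu_cls.
  exact/cls_eqP/simm_mu2_bar.
by rewrite size_cat /= !size_nseq; lia.
Qed.

Lemma qmu_bracket_cls ps i : size ps = (2 * m).-1 -> i < m ->
  qmu (take i (map cls ps) ++ qmu (take m (drop i (map cls ps))) :: drop (i + m) (map cls ps))
  = cls (mu2 (take i ps ++ mu2 (take m (drop i ps)) :: drop (i + m) ps)).
Proof.
move=> sz i_lt; rewrite -!map_drop -!map_take qmu_cls; last by rewrite size_takel // size_drop; lia.
rewrite -[_ :: map _ _]/(map cls (_ :: _)) -map_cat qmu_cls //.
by rewrite size_cat /= size_takel ?size_drop; lia.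
Qed.

Lemma qmu_assoc : mary_assoc m qmu.
Proof.
move=> i j s sz_s i_lt j_lt; rewrite -(map_cls_rep s) !qmu_bracket_cls ?size_map //.
congr cls; rewrite /mu2 !map_cat /= !map_take !map_drop.
by congr pair; apply: mu_assoc; rewrite ?size_map.
Qed.

Lemma qmu_solvable u t g : size u + size t = n -> exists! h, qmu (u ++ h :: t) = g.
Proof.
move=> sz; set xs := map fst (map (@rep _ _ _) (u ++ t)).
set ys := map snd (map (@rep _ _ _) (u ++ t)).
have sz_xs : size xs = n by rewrite !size_map size_cat.
have sz_ys : size ys = n by rewrite !size_map size_cat.
have qmu_slot h : qmu (u ++ h :: t) = cls (mu ((rep h).1 :: xs), mu ((rep h).2 :: ys)).
  by rewrite qmuE map_cat /= mu2_rot ?size_map // -map_cat.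
rewrite -(cls_rep g); case: (rep g) => c d.
exists (cls (mu (c :: ys), mu (d :: xs))); split.
  rewrite qmu_slot; apply/cls_eqP/(simm_trans _ (simm_solution c d sz_xs sz_ys)).
  by case: (rep _) (simm_rep_cls (mu (c :: ys), mu (d :: xs))) => a b; apply: simm_mu_cons.
move=> h; rewrite qmu_slot => /cls_eqP Hh; rewrite -(cls_rep h); apply/cls_eqP.
move: Hh; case: (rep h) => a b Hab; apply: (simm_mu_cons_cancel sz_xs sz_ys).
exact: simm_trans (simm_solution c d sz_xs sz_ys) (simm_sym Hab).
Qed.

End CommutativeSemigroup.

Theorem mainTheorem7 (S : Type) (m : nat) (mu : seq S -> S) :
  2 <= m -> mary_assoc m mu -> mary_comm m mu ->
  ((forall p, simm m mu p p) /\
   (forall p q, simm m mu p q -> simm m mu q p) /\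
   (forall p q r, simm m mu p q -> simm m mu q r -> simm m mu p r)) /\
  (forall ps : seq (S * S), size ps = m ->
     qmu m mu (map (cls m mu) ps)
     = cls m mu (mu (map fst ps), mu (map snd ps))) /\
  (forall a b : S,
     qbar m mu (cls m mu (a, b))
     = cls m mu (mu (a :: nseq m.-1 b), mu (rcons (nseq m.-1 a) b))) /\
  (forall (X : quot m mu) (i : nat), i < m ->
     qmu m mu (nseq i X ++ qbar m mu X :: nseq (m.-1 - i) X) = X) /\
  mary_group m (qmu m mu) /\ is_querelement_map m (qmu m mu) (qbar m mu).
Proof.
move=> m_gt1 mu_assoc mu_comm.
have qmu_qbar := qmu_qbar m_gt1 mu_assoc mu_comm.
split; first by do !split; [exact: simm_refl | exact: simm_sym | exact: simm_trans].
split; first exact: qmu_cls.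
split; first by move=> a b; rewrite (qbar_cls m_gt1 mu_assoc mu_comm).
split; first exact: qmu_qbar.
split; last exact: qmu_qbar.
by split; [exact: qmu_assoc | exact: qmu_solvable].
Qed.
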